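(* Let $m<M$ be real numbers and let $X$ be a random variable taking values in $[m,M]$, either discrete (taking finitely many values $x_1,\dots,x_n\in[m,M]$ with probabilities $p_1,\dots,p_n$) or continuous (with probability density $f$ on $[m,M]$). Let $\mu_4$ denote the fourth central moment of $X$. Then $$\mu_4\le \frac{(M-m)^4}{12}.$$
   Context: The mean is $\mu_1'=\sum_{i=1}^n p_i x_i$ (discrete case) or $\mu_1'=\int_m^M x f(x)\,dx$ (continuous case), where $\sum p_i=1$, resp. $\int_m^M f(x)\,dx=1$. The $r$-th central moment is $\mu_r=\sum_{i=1}^n p_i (x_i-\mu_1')^r$, resp. $\mu_r=\int_m^M (x-\mu_1')^r f(x)\,dx$. *)

From HB Require Import structures.
From mathcomp Require Import all_boot all_order all_algebra.
From mathcomp Require Import all_classical all_reals all_analysis.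
Set Implicit Arguments. Unset Strict Implicit. Unset Printing Implicit Defensive.
Import Order.TTheory GRing.Theory Num.Theory.
Local Open Scope classical_set_scope.
Local Open Scope ring_scope.

Definition disc_mean (R : realType) (n : nat) (x p : 'I_n -> R) : R :=
  \sum_(i < n) p i * x i.
Definition disc_central_moment (R : realType) (r n : nat) (x p : 'I_n -> R) : R :=
  \sum_(i < n) p i * (x i - disc_mean x p) ^+ r.

Definition cont_mean (R : realType) (m M : R) (f : R -> R) : R :=
  Rintegral (@lebesgue_measure R) `[m, M] (fun t => t * f t).
Definition cont_central_moment (R : realType) (r : nat) (m M : R) (f : R -> R) : R :=
  Rintegral (@lebesgue_measure R) `[m, M]
    (fun t => (t - cont_mean m M f) ^+ r * f t).

(** The quartic [y ^+ 4] is convex, so on [[a, b]] it lies below its secant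
    [a ^+ 4 + s * (y - a)] with slope [s = (a + b) * (a ^+ 2 + b ^+ 2)].
    Applying this to [y = X - mu] with [a = m - mu] and [b = M - mu] and taking
    expectations, the linear term vanishes because [X - mu] has mean zero, so
    [mu_4 <= a ^+ 4 - a * s = - a * b * (a ^+ 2 + a * b + b ^+ 2)].  This value is
    at most [(b - a) ^+ 4 / 12], the difference being a square over [12]. *)

From HB Require Import structures.
From mathcomp Require Import all_boot all_order all_algebra.
From mathcomp Require Import all_classical all_reals all_analysis.
From mathcomp Require Import ring lra.
Import Order.TTheory GRing.Theory Num.Theory.
Local Open Scope classical_set_scope.
Local Open Scope ring_scope.

Section QuarticSecant.
Context {R : realFieldType}.

Definition quartic_secant_slope (a b : R) : R := (a + b) * (a ^+ 2 + b ^+ 2).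

Definition quartic_secant_at0 (a b : R) : R := a ^+ 4 - a * quartic_secant_slope a b.

Lemma expr4_le_quartic_secant (a b y : R) : a <= y <= b ->
  y ^+ 4 <= quartic_secant_at0 a b + quartic_secant_slope a b * y.
Proof.
move=> /andP[ay yb]; rewrite /quartic_secant_at0 /quartic_secant_slope -subr_ge0.
have quadratic_ge0 : 0 <= y ^+ 2 + (a + b) * y + (a ^+ 2 + a * b + b ^+ 2).
  have := sqr_ge0 (2 * y + a + b); have := sqr_ge0 (a + b).
  have := sqr_ge0 a; have := sqr_ge0 b; nra.
have -> : a ^+ 4 - a * ((a + b) * (a ^+ 2 + b ^+ 2)) + (a + b) * (a ^+ 2 + b ^+ 2) * y
    - y ^+ 4 = (y - a) * (b - y) * (y ^+ 2 + (a + b) * y + (a ^+ 2 + a * b + b ^+ 2))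
  by ring.
by rewrite mulr_ge0 // mulr_ge0 // subr_ge0.
Qed.

Lemma quartic_secant_at0_le (a b : R) : quartic_secant_at0 a b <= (b - a) ^+ 4 / 12.
Proof.
rewrite /quartic_secant_at0 /quartic_secant_slope -subr_ge0.
have -> : (b - a) ^+ 4 / 12 - (a ^+ 4 - a * ((a + b) * (a ^+ 2 + b ^+ 2))) =
    ((b - a) ^+ 2 + 6 * a * b) ^+ 2 / 12 by field.
by rewrite divr_ge0 // sqr_ge0.
Qed.

End QuarticSecant.

Lemma disc_centered_mean (R : realType) (n : nat) (x p : 'I_n -> R) :
  \sum_(i < n) p i = 1 -> \sum_(i < n) p i * (x i - disc_mean x p) = 0.
Proof.
move=> p1; under eq_bigr => i _ do rewrite mulrBr.
by rewrite sumrB -mulr_suml p1 mul1r subrr.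
Qed.

Lemma disc_central_moment4_le (R : realType) (m M : R) (n : nat) (x p : 'I_n -> R) :
  (forall i, 0 <= p i) -> \sum_(i < n) p i = 1 -> (forall i, m <= x i <= M) ->
  disc_central_moment 4 x p <= (M - m) ^+ 4 / 12.
Proof.
move=> p_ge0 p1 x_in; set c := disc_mean x p.
set A := quartic_secant_at0 (m - c) (M - c); set B := quartic_secant_slope (m - c) (M - c).
have -> : M - m = (M - c) - (m - c) by ring.
apply: le_trans (quartic_secant_at0_le _ _).
apply: (@le_trans _ _ (\sum_(i < n) p i * (A + B * (x i - c)))).
  apply: ler_sum => i _; rewrite ler_wpM2l // expr4_le_quartic_secant //.
  by have /andP[? ?] := x_in i; rewrite !lerB.
under eq_bigr => i _ do rewrite mulrDr mulrCA.
by rewrite big_split /= -mulr_suml p1 mul1r -mulr_sumr disc_centered_mean // mulr0 addr0.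
Qed.

Section ContinuousCase.
Variables (R : realType) (m M : R) (f : R -> R).
Notation leb := (@lebesgue_measure R).
Hypotheses (f_int : leb.-integrable `[m, M] (EFin \o f))
  (f1 : Rintegral leb `[m, M] f = 1).

Let mD : measurable (`[m, M] : set R). Proof. by []. Qed.

Lemma integrable_centered_power_mul (c : R) (k : nat) :
  leb.-integrable `[m, M] (EFin \o (fun t => (t - c) ^+ k * f t)).
Proof.
have h_bounded : [bounded (t - c) ^+ k | t in `[m, M]].
  exists ((`|m - c| + `|M - c|) ^+ k); split; first by rewrite num_real.
  move=> K K_gt t; rewrite /= in_itv /= => /andP[mt tM].
  apply: le_trans (ltW K_gt); rewrite normrX lerXn2r ?nnegrE ?addr_ge0 //.
  have := ler_norm (m - c); have := ler_norm (M - c).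
  have := ler_norm (- (m - c)); have := ler_norm (- (M - c)).
  rewrite !normrN ler_norml; lra.
have h_meas : measurable_fun `[m, M] (fun t : R => (t - c) ^+ k).
  by apply: measurable_realfun.measurable_funX; apply: measurable_realfun.measurable_funB.
have := @integrableMr _ _ _ leb _ mD _ _ h_meas h_bounded f_int.
by apply: eq_integrable => // t _ /=; rewrite EFinM.
Qed.

Let integrableZ (k : R) [g : R -> R] :
  leb.-integrable `[m, M] (EFin \o g) ->
  leb.-integrable `[m, M] (EFin \o (fun t => k * g t)).
Proof.
move=> g_int; have := @integrableZl _ _ _ leb _ mD k _ g_int.
by apply: eq_integrable => // t _ /=; rewrite EFinM.
Qed.

Lemma cont_centered_mean :
  Rintegral leb `[m, M] (fun t => (t - cont_mean m M f) * f t) = 0.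
Proof.
have integrable_tf : leb.-integrable `[m, M] (EFin \o (fun t => t * f t)).
  have := integrable_centered_power_mul 0 1.
  by apply: eq_integrable => // t _ /=; rewrite subr0 expr1.
under eq_Rintegral => t _ do rewrite mulrBl.
by rewrite RintegralB ?RintegralZl ?f1 ?mulr1 ?subrr //; exact: integrableZ.
Qed.

Lemma cont_central_moment4_le : (forall t, m <= t <= M -> 0 <= f t) ->
  cont_central_moment 4 m M f <= (M - m) ^+ 4 / 12.
Proof.
move=> f_ge0; rewrite /cont_central_moment; set c := cont_mean m M f.
set A := quartic_secant_at0 (m - c) (M - c); set B := quartic_secant_slope (m - c) (M - c).
have -> : M - m = (M - c) - (m - c) by ring.
apply: le_trans (quartic_secant_at0_le _ _).
have integrable_centered : leb.-integrable `[m, M] (EFin \o (fun t => (t - c) * f t)).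
  by have := integrable_centered_power_mul c 1; apply: eq_integrable => // t _ /=; rewrite expr1.
have integrable_secant :
    leb.-integrable `[m, M] (EFin \o (fun t => A * f t + B * ((t - c) * f t))).
  have := @integrableD _ _ _ leb _ mD _ _
    (integrableZ A f_int) (integrableZ B integrable_centered).
  by apply: eq_integrable => // t _ /=; rewrite EFinD.
apply: (le_trans (@le_Rintegral _ _ _ leb _ _ _ mD
    (integrable_centered_power_mul c 4) integrable_secant _)).
  move=> t; rewrite /= in_itv /= => t_in.
  rewrite mulrA -mulrDl ler_wpM2r ?f_ge0 // expr4_le_quartic_secant //.
  by case/andP: t_in => ? ?; rewrite !lerB.
rewrite RintegralD ?RintegralZl //; try exact: integrableZ.
by rewrite cont_centered_mean f1 mulr1 mulr0 addr0.
Qed.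

End ContinuousCase.

Theorem theorem2p1 (R : realType) (m M : R) (hmM : m < M) :
  (forall (n : nat) (x p : 'I_n -> R),
      (forall i, 0 <= p i) ->
      \sum_(i < n) p i = 1 ->
      (forall i, m <= x i <= M) ->
      disc_central_moment 4 x p <= (M - m) ^+ 4 / 12)
  /\
  (forall f : R -> R,
      measurable_fun `[m, M] f ->
      (forall t, m <= t <= M -> 0 <= f t) ->
      (@lebesgue_measure R).-integrable `[m, M] (fun t => (f t)%:E) ->
      Rintegral (@lebesgue_measure R) `[m, M] f = 1 ->
      cont_central_moment 4 m M f <= (M - m) ^+ 4 / 12).
Proof.
(* Measurability of [f] is implied by its integrability. *)
split; first exact: disc_central_moment4_le.
by move=> f _ f_ge0 f_int f1; exact: cont_central_moment4_le.
Qed.
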